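(* Suppose Assumption 4.1 holds, and that $\sum_{n=1}^\infty p_n<\infty$ and $\lim_{n\to\infty}\mu_n=0$. Then the sequence $\{x_n\}$ generated by Algorithm 3.1 converges linearly to some point of $\Omega$; that is, there exist $p\in\Omega$, $q\in(0,1)$ and $K\ge0$ such that $\|x_n-p\|^2\le K q^{n}$ for all $n$.
   Context: Let $H$ be a real Hilbert space, $A:H\to H$ a single-valued mapping and $B:H\to 2^H$ a set-valued mapping, and let $\Omega:=(A+B)^{-1}(0)=\{x\in H:\ 0\in Ax+Bx\}$. Algorithm 3.1 is the following iteration. Fix $x_0,x_1\in H$, $\mu\in(0,1)$, $\lambda_1>0$, real sequences $\{\alpha_n\},\{\beta_n\},\{\theta_n\}$ and nonnegative real sequences $\{\mu_n\},\{p_n\}$. For $n=1,2,\dots$ compute $w_n=x_n+\alpha_n(x_n-x_{n-1})$, $z_n=x_n+\beta_n(x_n-x_{n-1})$, $y_n=(I+\lambda_nB)^{-1}(I-\lambda_nA)w_n$, and set $\lambda_{n+1}=\min\{(\mu_n+\mu)\|w_n-y_n\|/\|Aw_n-Ay_n\|,\ \lambda_n+p_n\}$ if $Aw_n\neq Ay_n$, and $\lambda_{n+1}=\lambda_n+p_n$ otherwise. If $w_n=y_n$ the algorithm stops (then $y_n\in\Omega$). Otherwise set $x_{n+1}=(1-\theta_n)z_n+\theta_n\big(y_n-\lambda_n(Ay_n-Aw_n)\big)$ and continue. Here $I$ is the identity and $(I+\lambda B)^{-1}$ is the resolvent of $B$. Throughout, it is assumed that the algorithm does not stop, so that infinite sequences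 $\{x_n\},\{w_n\},\{z_n\},\{y_n\},\{\lambda_n\}$ are generated. Assumption 4.1: (i) $\Omega\neq\emptyset$. (ii) Either $A$ is $L$-Lipschitz continuous and $r$-strongly monotone and $B$ is maximal monotone, or $A$ is $L$-Lipschitz continuous and monotone and $B$ is maximal monotone and $r$-strongly monotone (for some $r>0$). (iii) With $\hat\lambda:=\min\{\mu/L,\lambda_1\}$ and $\tau:=1-\frac12\min\{1-\mu,\ 2\hat\lambda r\}\in(\tfrac12,1)$, the parameters satisfy: ($c_1$) $0\le\beta_n\le\beta<\frac12\big(\frac1\tau-1\big)$; ($c_2$) $0\le\alpha_n\le\alpha<\frac{1-\tau}{\tau}$; ($c_3$) $\max\Big\{\frac{1-\beta}{1+\alpha-\beta},\ \frac{\beta}{1+\beta-\tau(1+\alpha)}\Big\}<\theta\le\theta_{n-1}\le\theta_n\le\frac{-1-\beta+\sqrt{(1+\beta)^2-4(\frac1\tau-1-2\beta)(\beta-1)}}{2(\frac1\tau-1-2\beta)}$ for all $n$, where $\alpha,\beta,\theta$ are constants. A set-valued $B$ is $r$-strongly monotone if $\langle u-v,x-y\rangle\ge r\|x-y\|^2$ whenever $u\in Bx$, $v\in By$; a single-valued $A$ is $r$-strongly monotone if $\langle Ax-Ay,x-y\rangle\ge r\|x-y\|^2$ for all $x,y$. *)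

From HB Require Import structures.
From mathcomp Require Import all_boot all_order all_algebra.
From mathcomp Require Import all_classical all_reals all_analysis.
Set Implicit Arguments. Unset Strict Implicit. Unset Printing Implicit Defensive.
Import Order.TTheory GRing.Theory Num.Theory.
Import numFieldNormedType.Exports.
Local Open Scope classical_set_scope.
Local Open Scope ring_scope.

(* A real Hilbert space is modelled as a complete normed space H over R
   together with an inner product inducing its norm. *)
Definition is_inner_product {R : realType} {H : completeNormedModType R}
  (ip : H -> H -> R) : Prop :=
  [/\ (forall x y, ip x y = ip y x),
      (forall a x y z, ip (a *: x + y) z = a * ip x z + ip y z) &
      (forall x, ip x x = `|x| ^+ 2)].

Section Ops.
Context {R : realType} {H : completeNormedModType R} (ip : H -> H -> R).

Definition lipschitz_op (A : H -> H) (L : R) : Prop :=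
  forall x y, `|A x - A y| <= L * `|x - y|.

Definition monotone_op (A : H -> H) : Prop :=
  forall x y, 0 <= ip (A x - A y) (x - y).

Definition strongly_monotone_op (A : H -> H) (r : R) : Prop :=
  forall x y, r * `|x - y| ^+ 2 <= ip (A x - A y) (x - y).

(* set-valued operators B : H -> 2^H, with u \in B x written B x u *)
Definition monotone_mop (B : H -> set H) : Prop :=
  forall x y u v, B x u -> B y v -> 0 <= ip (u - v) (x - y).

Definition strongly_monotone_mop (B : H -> set H) (r : R) : Prop :=
  forall x y u v, B x u -> B y v -> r * `|x - y| ^+ 2 <= ip (u - v) (x - y).

Definition maximal_monotone_mop (B : H -> set H) : Prop :=
  monotone_mop B /\
  forall B' : H -> set H, monotone_mop B' ->
    (forall x u, B x u -> B' x u) -> forall x u, B' x u -> B x u.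

(* y \in (I + lam B)^{-1} x, i.e. x \in y + lam B y *)
Definition in_resolvent (B : H -> set H) (lam : R) (x y : H) : Prop :=
  exists b, B y b /\ x = y + lam *: b.

Definition zeros_sum (A : H -> H) (B : H -> set H) : set H :=
  [set x | exists b, B x b /\ A x + b = 0].
End Ops.

(* Let [u n = y n - lam n (A (y n) - A (w n))] be the forward-backward-forward point.
   The adaptive step sizes converge to a positive limit, so the effective Lipschitz
   ratio of the step tends to [mu < 1]; together with the [r]-strong monotonicity of
   [A + B] this gives, for large [n], [|u n - p|^2 <= tau |w n - p|^2] for any
   solution [p].  Inserting this into the relaxed inertial update yields
   [E (n+1) <= rho E n] for the energy
   [E n = |x n - p|^2 + (1 - theta (n-1)) (1 - beta (n-1)) / theta (n-1) |x n - x (n-1)|^2],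
   and conditions (c1)-(c3) are exactly what makes [rho < 1]: the coefficient of
   [|x n - p|^2] is worst at [theta0], that of [|x n - x (n-1)|^2] at the root [ub] of
   the quadratic in (c3).  Hence [|x n - p|^2 <= E n] decays geometrically. *)

From HB Require Import structures.
From mathcomp Require Import all_boot all_order all_algebra.
From mathcomp Require Import all_classical all_reals all_analysis.
From mathcomp Require Import ring lra.
Import Order.TTheory GRing.Theory Num.Theory.
Import numFieldNormedType.Exports.
Local Open Scope classical_set_scope.
Local Open Scope ring_scope.
Set Implicit Arguments. Unset Strict Implicit. Unset Printing Implicit Defensive.

(* With [X = x n - p], [Y = x n.-1 - p] and [Z = x n.+1 - p], one step of the scheme
   gives [|Z|^2 + weight |Z - X|^2 <= coefP |X|^2 + coefD |X - Y|^2]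
   ([inertial_step_le]); conditions (c1)-(c3) make [coefP < 1] and [coefD < weight]. *)
Definition inertial_coefP (R : realType) (tau th al be : R) : R :=
  (1 - th) * (1 + be) + th * tau * (1 + al).

Definition inertial_coefD (R : realType) (tau th al be : R) : R :=
  (1 - th) * be * (1 + be) + th * tau * al * (1 + al) + (1 - th) * be * (1 - be) / th.

Definition inertial_weight (R : realType) (th be : R) : R := (1 - th) * (1 - be) / th.

Section HilbertSpace.
Variables (R : realType) (H : completeNormedModType R) (ip : H -> H -> R).
Hypothesis ip_inner : is_inner_product ip.

Lemma ipC x y : ip x y = ip y x. Proof. by case: ip_inner. Qed.

Lemma ipDl x y z : ip (x + y) z = ip x z + ip y z.
Proof. by case: ip_inner => _ h _; have := h 1 x y z; rewrite scale1r mul1r. Qed.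

Lemma ip0l z : ip 0 z = 0.
Proof. by have := ipDl 0 0 z; rewrite addr0; lra. Qed.

Lemma ipZl a x z : ip (a *: x) z = a * ip x z.
Proof.
by case: ip_inner => _ h _; have := h a x 0 z; rewrite addr0 ip0l addr0.
Qed.

Lemma ipNl x z : ip (- x) z = - ip x z.
Proof. by rewrite -scaleN1r ipZl mulN1r. Qed.

Lemma ipBl x y z : ip (x - y) z = ip x z - ip y z.
Proof. by rewrite ipDl ipNl. Qed.

Lemma ipDr x y z : ip z (x + y) = ip z x + ip z y.
Proof. by rewrite ipC ipDl !(ipC z). Qed.

Lemma ipZr a x z : ip z (a *: x) = a * ip z x.
Proof. by rewrite ipC ipZl ipC. Qed.

Lemma ipNr x z : ip z (- x) = - ip z x.
Proof. by rewrite ipC ipNl ipC. Qed.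

Lemma ipBr x y z : ip z (x - y) = ip z x - ip z y.
Proof. by rewrite ipDr ipNr. Qed.

Definition ipE := (ipBl, ipDl, ipZl, ipNl, ipBr, ipDr, ipZr, ipNr).

Lemma ipxxE x : ip x x = `|x| ^+ 2. Proof. by case: ip_inner. Qed.

Lemma ipxx_ge0 x : 0 <= ip x x. Proof. by rewrite ipxxE sqr_ge0. Qed.

Lemma ipxx_eq0 x : ip x x = 0 -> x = 0.
Proof. by rewrite ipxxE => /eqP; rewrite sqrf_eq0 normr_eq0 => /eqP. Qed.

Lemma ipxxD_le x y : ip (x + y) (x + y) <= 2 * ip x x + 2 * ip y y.
Proof. have := ipxx_ge0 (x - y); rewrite !ipE (ipC y x); lra. Qed.

(* Identities between linear combinations are checked by expanding the squared
   norm of their difference, which turns them into ring identities. *)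
Lemma inertial_sub_decomp (a b p : H) (al : R) :
  a + al *: (a - b) - p = (1 + al) *: (a - p) - al *: (b - p).
Proof.
apply/eqP; rewrite -subr_eq0; apply/eqP/ipxx_eq0.
by rewrite !ipE ?(ipC b a) ?(ipC p a) ?(ipC p b); ring.
Qed.

Lemma relaxed_sub_decomp (a b c p : H) (be th : R) :
  (1 - th) *: (a + be *: (a - b)) + th *: c - p =
  (1 - th) *: ((1 + be) *: (a - p) - be *: (b - p)) + th *: (c - p).
Proof.
apply/eqP; rewrite -subr_eq0; apply/eqP/ipxx_eq0.
rewrite !ipE ?(ipC b a) ?(ipC c a) ?(ipC p a) ?(ipC c b) ?(ipC p b) ?(ipC p c).
ring.
Qed.

Definition strongly_monotone_sum (A : H -> H) (B : H -> set H) (r : R) : Prop :=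
  forall x y u v, B x u -> B y v ->
    r * `|x - y| ^+ 2 <= ip (u - v) (x - y) + ip (A x - A y) (x - y).

Lemma strongly_monotone_sum_of (A : H -> H) (B : H -> set H) (r : R) :
  (strongly_monotone_op ip A r /\ monotone_mop ip B) \/
  (monotone_op ip A /\ strongly_monotone_mop ip B r) ->
  strongly_monotone_sum A B r.
Proof.
case=> [[hA hB] | [hA hB]] x y u v hu hv.
- by have := hB _ _ _ _ hu hv; have := hA x y; lra.
- by have := hB _ _ _ _ hu hv; have := hA x y; lra.
Qed.

Lemma tseng_estimate (D E G : H) (lam r kap : R) :
  lam * r * ip E E <= ip (D - lam *: G) E ->
  lam ^+ 2 * ip G G <= kap ^+ 2 * ip D D ->
  ip (E + lam *: G) (E + lam *: G) <=
  ip (D + E) (D + E) - (1 - kap ^+ 2) * ip D D - 2 * lam * r * ip E E.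
Proof. by rewrite !ipE ?(ipC E D) ?(ipC G E) ?(ipC G D) ?(ipC E G) ?(ipC D G); nra. Qed.

Lemma resolvent_monotone_le (w y b bp Aw Ay Ap E : H) (lam r : R) :
  0 <= lam -> w - lam *: Aw = y + lam *: b -> Ap + bp = 0 ->
  r * ip E E <= ip (b - bp) E + ip (Ay - Ap) E ->
  lam * r * ip E E <= ip (w - y - lam *: (Aw - Ay)) E.
Proof.
move=> lam0 /(congr1 (ip^~ E)) e1 /(congr1 (ip^~ E)) e2 hm.
move: e1 e2 hm; rewrite !ipE ip0l => e1 e2 hm.
have : lam * (r * ip E E) <= lam * (ip b E - ip bp E + (ip Ay E - ip Ap E)).
  exact: ler_wpM2l.
nra.
Qed.

Lemma tseng_step_le (A : H -> H) (B : H -> set H) (r lam kap : R) (p w y : H) :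
  strongly_monotone_sum A B r -> zeros_sum A B p -> 0 <= lam ->
  in_resolvent B lam (w - lam *: A w) y ->
  lam ^+ 2 * ip (A w - A y) (A w - A y) <= kap ^+ 2 * ip (w - y) (w - y) ->
  ip (y - lam *: (A y - A w) - p) (y - lam *: (A y - A w) - p) <=
  ip (w - p) (w - p) - (1 - kap ^+ 2) * ip (w - y) (w - y)
    - 2 * lam * r * ip (y - p) (y - p).
Proof.
move=> hsum [bp [hBp hAp]] lam0 [b [hBy hwy]] hkap.
have hE : lam * r * ip (y - p) (y - p) <= ip (w - y - lam *: (A w - A y)) (y - p).
  by apply: resolvent_monotone_le lam0 hwy hAp _; rewrite ipxxE; exact: hsum.
have -> : y - lam *: (A y - A w) - p = (y - p) + lam *: (A w - A y).
  by rewrite -[A y - A w]opprB scalerN opprK addrAC.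
by have := tseng_estimate hE hkap; rewrite addrA subrK.
Qed.

Lemma tseng_step_contraction (A : H -> H) (B : H -> set H) (r lam kap m : R)
    (p w y : H) :
  strongly_monotone_sum A B r -> zeros_sum A B p -> 0 <= lam ->
  in_resolvent B lam (w - lam *: A w) y ->
  lam ^+ 2 * ip (A w - A y) (A w - A y) <= kap ^+ 2 * ip (w - y) (w - y) ->
  0 <= m -> m <= 1 - kap ^+ 2 -> m <= 2 * lam * r ->
  ip (y - lam *: (A y - A w) - p) (y - lam *: (A y - A w) - p) <=
  (1 - 2^-1 * m) * ip (w - p) (w - p).
Proof.
move=> hsum hp lam0 hy hkap m0 m1 m2.
have := tseng_step_le hsum hp lam0 hy hkap.
have := ipxxD_le (w - y) (y - p); rewrite addrA subrK.
have D0 := ipxx_ge0 (w - y); have E0 := ipxx_ge0 (y - p).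
have : m * ip (w - y) (w - y) <= (1 - kap ^+ 2) * ip (w - y) (w - y) by exact: ler_wpM2r.
have : m * ip (y - p) (y - p) <= 2 * lam * r * ip (y - p) (y - p) by exact: ler_wpM2r.
move=> h1 h2 hW; have := ler_wpM2l m0 hW.
lra.
Qed.

Lemma inertial_step_le (X Y U Z : H) (tau th al be : R) :
  0 < th -> th < 1 -> 0 <= be -> 0 <= al -> 0 <= tau ->
  ip U U <= tau * ip ((1 + al) *: X - al *: Y) ((1 + al) *: X - al *: Y) ->
  Z = (1 - th) *: ((1 + be) *: X - be *: Y) + th *: U ->
  ip Z Z + inertial_weight th be * ip (Z - X) (Z - X) <=
  inertial_coefP tau th al be * ip X X + inertial_coefD tau th al be * ip (X - Y) (X - Y).
Proof.
move=> th0 th1 be0 al0 tau0 hU hZ.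
set W := (1 + al) *: X - al *: Y in hU.
set V := Z - X - (X - Y).
rewrite -subr_ge0.
have -> : inertial_coefP tau th al be * ip X X
    + inertial_coefD tau th al be * ip (X - Y) (X - Y)
    - (ip Z Z + inertial_weight th be * ip (Z - X) (Z - X)) =
    th * (tau * ip W W - ip U U) + ((1 - th) * be + th * tau * al) * ip Y Y
    + (1 - th) * be / th * ip V V.
  rewrite /V /W hZ /inertial_coefP /inertial_coefD /inertial_weight !ipE.
  by rewrite ?(ipC Y X) ?(ipC U X) ?(ipC U Y); field; rewrite gt_eqF.
have := ipxx_ge0 Y; have := ipxx_ge0 V.
have : 0 <= th * (tau * ip W W - ip U U) by rewrite mulr_ge0 ?subr_ge0 // ltW.
have : 0 <= (1 - th) * be + th * tau * al by rewrite addr_ge0 ?mulr_ge0 //; lra.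
have : 0 <= (1 - th) * be / th by rewrite divr_ge0 ?mulr_ge0 //; lra.
nra.
Qed.

End HilbertSpace.

Lemma quadratic_formula_root (R : rcfType) (k b c u : R) :
  k != 0 -> 0 <= b ^+ 2 - 4 * k * c ->
  u = (- b + Num.sqrt (b ^+ 2 - 4 * k * c)) / (2 * k) ->
  k * u ^+ 2 + b * u + c = 0.
Proof.
move=> k0 D0 ->; have := sqr_sqrtr D0; set s := Num.sqrt _ => s2.
rewrite -[LHS](mulrK (_ : 4 * k \is a GRing.unit)); last first.
  by rewrite unitfE mulf_neq0 // pnatr_eq0.
have -> : (k * ((- b + s) / (2 * k)) ^+ 2 + b * ((- b + s) / (2 * k)) + c) * (4 * k)
    = s ^+ 2 - (b ^+ 2 - 4 * k * c) by field.
by rewrite s2 subrr mul0r.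
Qed.

(* [inertial_coefD_lt_weight] after the substitution [x = (1 - th) / th]. *)
Lemma inertial_key_poly (R : realType) (tau al0 be0 x : R) :
  2^-1 < tau -> tau < 1 -> 0 <= be0 -> 2 * be0 * tau < 1 - tau ->
  0 <= al0 -> al0 * tau < 1 - tau -> 0 < x ->
  (1 - be0) * x < al0 -> tau * (1 + al0) < 1 - be0 * x ->
  (1 - tau - 2 * be0 * tau) + tau * (1 + be0) * (1 + x)
    - tau * (1 - be0) * (1 + x) ^+ 2 <= 0 ->
  tau * x * be0 * (1 + be0) + tau * tau * al0 * (1 + al0)
    - tau * x * (1 + x) * (1 - be0) ^+ 2 < 0.
Proof.
move=> t0 t1 b0 hb a0 ha x0 h3 h4 h5.
have tau0 : 0 < tau by lra.
set c := tau * al0; set cs := 1 - tau - be0 * x.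
have c0 : 0 <= c by rewrite /c mulr_ge0 //; lra.
have ccs : c < cs by rewrite /c /cs; lra.
have e1 : tau * tau * al0 * (1 + al0) = c * (tau + c) by rewrite /c; ring.
have i1 : c * (tau + c) < cs * (tau + cs) by nra.
have bt : be0 <= tau by nra.
have i2 : x * tau * (1 - be0) < 1 - tau.
  have : tau * ((1 - be0) * x) < tau * al0 by rewrite ltr_pM2l.
  lra.
have i3 : x * be0 <= 1.
  have j1 : be0 * (x * tau * (1 - be0)) <= be0 * (1 - tau) by apply: ler_wpM2l; lra.
  have j2 : be0 * (1 - tau) <= tau * (1 - be0) by nra.
  have tb : 0 < tau * (1 - be0) by apply: mulr_gt0; lra.
  rewrite -(ler_pM2r tb) mul1r; apply: le_trans j2; apply: le_trans j1; lra.
have i4 : be0 * x * (-2 + tau + x * (be0 + tau - tau * be0)) <= 0.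
  by apply: mulr_ge0_le0; [rewrite mulr_ge0 // ltW | nra].
rewrite e1.
have : tau * x * be0 * (1 + be0) + cs * (tau + cs)
    - tau * x * (1 + x) * (1 - be0) ^+ 2 <= 0 by rewrite /cs; nra.
lra.
Qed.

Lemma inertial_coefD_lt_weight (R : realType) (tau al0 be0 th : R) :
  2^-1 < tau -> tau < 1 -> 0 <= be0 -> 2 * be0 * tau < 1 - tau -> 0 <= al0 ->
  al0 * tau < 1 - tau -> 0 < th -> th < 1 ->
  1 - be0 < th * (1 + al0 - be0) -> be0 < th * (1 + be0 - tau * (1 + al0)) ->
  (tau^-1 - 1 - 2 * be0) * th ^+ 2 + (1 + be0) * th + be0 - 1 <= 0 ->
  inertial_coefD tau th al0 be0 < inertial_weight th be0.
Proof.
move=> t0 t1 b0 hb a0 ha th0 th1 h3 h4 h5.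
set x := (1 - th) / th.
have ex : x * th = 1 - th by rewrite /x divfK ?gt_eqF.
have x0 : 0 < x by rewrite /x divr_gt0 // subr_gt0.
have e1x : 1 + x = th^-1 by rewrite /x; field; rewrite gt_eqF.
have tau0 : 0 < tau by lra.
have := inertial_key_poly t0 t1 b0 hb a0 ha x0 ltac:(nra) ltac:(nra).
have -> : (1 - tau - 2 * be0 * tau) + tau * (1 + be0) * (1 + x)
    - tau * (1 - be0) * (1 + x) ^+ 2 = tau / th ^+ 2 *
    ((tau^-1 - 1 - 2 * be0) * th ^+ 2 + (1 + be0) * th + be0 - 1).
  by rewrite e1x; field; rewrite !gt_eqF.
move/(_ (mulr_ge0_le0 (divr_ge0 (ltW tau0) (exprn_ge0 2 (ltW th0))) h5)).
have -> : tau * x * be0 * (1 + be0) + tau * tau * al0 * (1 + al0)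
    - tau * x * (1 + x) * (1 - be0) ^+ 2 = tau / th *
    (inertial_coefD tau th al0 be0 - inertial_weight th be0).
  by rewrite e1x /x /inertial_coefD /inertial_weight; field; rewrite !gt_eqF.
by rewrite pmulr_rlt0 ?subr_lt0 // divr_gt0.
Qed.

Lemma inertial_coefP_le (R : realType) (tau al0 be0 th0 th al be : R) :
  0 <= tau -> tau * (1 + al0) <= 1 + be0 -> 0 <= th0 -> th0 <= th -> th <= 1 ->
  0 <= al <= al0 -> 0 <= be <= be0 ->
  inertial_coefP tau th al be <= inertial_coefP tau th0 al0 be0.
Proof.
move=> t0 hd th00 th0th th1 /andP[a0 aa0] /andP[b0 bb0]; rewrite /inertial_coefP.
have : (1 - th) * (1 + be) <= (1 - th) * (1 + be0) by apply: ler_wpM2l; lra.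
have : th * tau * (1 + al) <= th * tau * (1 + al0).
  by apply: ler_wpM2l; [apply: mulr_ge0 | ]; lra.
have : (th - th0) * (tau * (1 + al0) - (1 + be0)) <= 0 by apply: mulr_ge0_le0; lra.
lra.
Qed.

Lemma inertial_coefD_le (R : realType) (tau al0 be0 th al be : R) :
  0 <= tau -> 0 < th -> th < 1 -> 0 <= al <= al0 -> 0 <= be <= be0 -> be0 <= 2^-1 ->
  inertial_coefD tau th al be <= inertial_coefD tau th al0 be0.
Proof.
move=> t0 th0 th1 /andP[a0 aa0] /andP[b0 bb0] bh; rewrite /inertial_coefD.
have j1 : (1 - th) * be * (1 + be) <= (1 - th) * be0 * (1 + be0).
  rewrite -!(mulrA (1 - th)); apply: ler_wpM2l; first lra.
  by apply: ler_pM; lra.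
have j2 : th * tau * al * (1 + al) <= th * tau * al0 * (1 + al0).
  rewrite -!(mulrA (th * tau)); apply: ler_wpM2l; first by apply: mulr_ge0; lra.
  by apply: ler_pM; lra.
have j3 : (1 - th) * be * (1 - be) / th <= (1 - th) * be0 * (1 - be0) / th.
  rewrite ler_pM2r ?invr_gt0 // -!(mulrA (1 - th)); apply: ler_wpM2l; first lra.
  nra.
lra.
Qed.

Lemma inertial_coefD_weight_le (R : realType) (tau al0 be0 th ub : R) :
  0 <= tau -> 0 <= al0 -> 0 <= be0 <= 1 -> 0 < th -> th <= ub -> ub < 1 ->
  inertial_coefD tau th al0 be0 * inertial_weight ub be0 <=
  inertial_coefD tau ub al0 be0 * inertial_weight th be0.
Proof.
move=> t0 a0 /andP[b0 b1] th0 thub ub1.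
have ub0 : 0 < ub by lra.
rewrite -subr_le0.
have -> : inertial_coefD tau th al0 be0 * inertial_weight ub be0 -
    inertial_coefD tau ub al0 be0 * inertial_weight th be0 =
    (1 - be0) * (th - ub) / (th * ub) * ((1 - th) * (1 - ub) * be0 * (1 + be0)
      + tau * al0 * (1 + al0) * (th + ub * (1 - th))).
  by rewrite /inertial_coefD /inertial_weight; field; rewrite !gt_eqF.
apply: mulr_le0_ge0.
  by apply: mulr_le0_ge0; [apply: mulr_ge0_le0 | rewrite invr_ge0 mulr_ge0]; lra.
by apply: addr_ge0; apply: mulr_ge0; (do 2?apply: mulr_ge0); nra.
Qed.

Lemma inertial_weight_le (R : realType) (th' th be' be : R) :
  0 < th' -> th' <= th -> th <= 1 -> be' <= be -> be <= 1 ->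
  inertial_weight th be <= inertial_weight th' be'.
Proof.
move=> th0 thth th1 bb b1; rewrite /inertial_weight.
have e (t b : R) : 0 < t -> (1 - t) * (1 - b) / t = (t^-1 - 1) * (1 - b).
  by move=> t0; field; rewrite gt_eqF.
rewrite !e //; last lra.
apply: ler_pM; [ | lra | | lra].
- by rewrite subr_ge0 invf_ge1; lra.
- by rewrite lerB // lef_pV2 // posrE; lra.
Qed.

Lemma inertial_coefD_le_ratio (R : realType) (tau al0 be0 ub th' th al be be' : R) :
  0 <= tau -> 0 <= al0 -> be0 <= 2^-1 -> 0 < th' -> th' <= th -> th <= ub -> ub < 1 ->
  0 <= al <= al0 -> 0 <= be <= be0 -> 0 <= be' <= be0 ->
  inertial_coefD tau th al be <=
  inertial_coefD tau ub al0 be0 / inertial_weight ub be0 * inertial_weight th' be'.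
Proof.
move=> t0 a0 bh th'0 th'th thub ub1 hal hbe /andP[be'0 be'1].
have b0 : 0 <= be0 by case/andP: hbe => b0 b1; lra.
have wub : 0 < inertial_weight ub be0 by rewrite divr_gt0 //; nra.
have coefD_ub : 0 <= inertial_coefD tau ub al0 be0.
  by apply: addr_ge0; [apply: addr_ge0 | apply: divr_ge0]; do ?apply: mulr_ge0; lra.
apply: (le_trans (inertial_coefD_le _ _ _ hal hbe _)); try lra.
apply: (@le_trans _ _ (inertial_coefD tau ub al0 be0 / inertial_weight ub be0 *
                      inertial_weight th be0)).
  by rewrite mulrAC ler_pdivlMr //; apply: inertial_coefD_weight_le; lra.
apply: ler_wpM2l; first by rewrite divr_ge0 // ltW.
by apply: inertial_weight_le; lra.
Qed.

Definition inertial_rate (R : realType) (tau al0 be0 th0 ub rho : R) : Prop :=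
  forall th' th al be be', th0 <= th' -> th' <= th -> th <= ub ->
    0 <= al <= al0 -> 0 <= be <= be0 -> 0 <= be' <= be0 ->
    inertial_coefP tau th al be <= rho /\
    inertial_coefD tau th al be <= rho * inertial_weight th' be'.

(* [ub] is the positive root of the quadratic in condition (c3); [rho] is the worse
   of the two contraction factors, attained at [th0] and at [ub] respectively. *)
Lemma inertial_rate_exists (R : realType) (tau al0 be0 th0 ub : R) :
  2^-1 < tau -> tau < 1 -> 0 <= be0 -> 2 * be0 * tau < 1 - tau ->
  0 <= al0 -> al0 * tau < 1 - tau ->
  1 - be0 < th0 * (1 + al0 - be0) -> be0 < th0 * (1 + be0 - tau * (1 + al0)) ->
  (tau^-1 - 1 - 2 * be0) * ub ^+ 2 + (1 + be0) * ub + be0 - 1 = 0 -> th0 <= ub ->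
  [/\ 0 < th0, ub < 1, be0 < 2^-1 &
   exists2 rho, 0 < rho < 1 & inertial_rate tau al0 be0 th0 ub rho].
Proof.
move=> t0 t1 b0 hb a0 ha h3 h4 hub th0ub.
have tp : 0 < tau by lra.
have bh : be0 < 2^-1 by nra.
have d3 : 0 < 1 + al0 - be0 by lra.
have d4 : 0 < 1 + be0 - tau * (1 + al0) by rewrite mulrDr mulr1 (mulrC tau); lra.
have th0p : 0 < th0 by nra.
have kp : 0 < tau^-1 - 1 - 2 * be0.
  by rewrite -(ltr_pM2r tp) mul0r !mulrBl mulVf ?gt_eqF // mul1r; lra.
have ub1 : ub < 1.
  rewrite ltNge; apply/negP => hu; move: hub kp; move: (_ - 2 * be0) => k hub kp.
  have : 1 <= ub ^+ 2 by rewrite expr2; nra.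
  nra.
have wub : 0 < inertial_weight ub be0 by rewrite divr_gt0 //; nra.
have coefD_ub := inertial_coefD_lt_weight t0 t1 b0 hb a0 ha (lt_le_trans th0p th0ub)
  ub1 ltac:(nra) ltac:(nra) ltac:(by rewrite hub).
set rhoP := inertial_coefP tau th0 al0 be0.
set rhoD := inertial_coefD tau ub al0 be0 / inertial_weight ub be0.
have rhoP01 : 0 < rhoP < 1 by rewrite /rhoP /inertial_coefP; apply/andP; split; nra.
have rhoD1 : rhoD < 1 by rewrite /rhoD ltr_pdivrMr // mul1r.
split=> //; exists (Num.max rhoP rhoD).
  by rewrite lt_max gt_max rhoD1 !andbT; case/andP: rhoP01 => -> ->.
move=> th' th al be be' th0th' th'th thub hal hbe hbe'.
have th_gt0 : 0 < th by lra.
split.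
  by rewrite le_max; apply/orP; left; apply: inertial_coefP_le; lra.
have := inertial_coefD_le_ratio (ltW tp) a0 (ltW bh) (lt_le_trans th0p th0th') th'th
  thub ub1 hal hbe hbe'.
move/le_trans; apply; apply: ler_wpM2r; last by rewrite le_max lexx orbT.
by case/andP: hbe' => be'0 be'1; apply: divr_ge0; [apply: mulr_ge0 | ]; lra.
Qed.

Lemma inertial_rate_of_conditions (R : realType) (tau al0 be0 th0 ub : R) :
  2^-1 < tau -> tau < 1 -> 0 <= be0 -> be0 < 2^-1 * (tau^-1 - 1) ->
  0 <= al0 -> al0 < (1 - tau) / tau ->
  Num.max ((1 - be0) / (1 + al0 - be0))
          (be0 / (1 + be0 - tau * (1 + al0))) < th0 ->
  ub = (- 1 - be0 + Num.sqrt ((1 + be0) ^+ 2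
          - 4 * (tau^-1 - 1 - 2 * be0) * (be0 - 1))) / (2 * (tau^-1 - 1 - 2 * be0)) ->
  th0 <= ub ->
  [/\ 0 < th0, ub < 1, be0 < 2^-1 &
   exists2 rho, 0 < rho < 1 & inertial_rate tau al0 be0 th0 ub rho].
Proof.
move=> t0 t1 b0 hb a0 ha hmax hub th0ub.
have tp : 0 < tau by lra.
have hb' : 2 * be0 * tau < 1 - tau.
  have : 2 * be0 * tau < (tau^-1 - 1) * tau by rewrite ltr_pM2r //; lra.
  by rewrite mulrBl mulVf ?gt_eqF // mul1r.
have ha' : al0 * tau < 1 - tau by rewrite -ltr_pdivlMr.
have d3 : 0 < 1 + al0 - be0 by nra.
have d4 : 0 < 1 + be0 - tau * (1 + al0) by rewrite mulrDr mulr1 (mulrC tau); lra.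
move: hmax; rewrite gt_max !ltr_pdivrMr // => /andP[h3 h4].
apply: inertial_rate_exists => //.
have kp : 0 < tau^-1 - 1 - 2 * be0 by lra.
rewrite -addrA; apply: quadratic_formula_root; first by rewrite gt_eqF.
  by rewrite subr_ge0; nra.
by rewrite hub opprD.
Qed.


Lemma nearly_nonincreasing_cvg (R : realType) (u p : nat -> R) (m : R) :
  (forall n, (1 <= n)%N -> m <= u n) ->
  (forall n, (1 <= n)%N -> u n.+1 <= u n + p n) ->
  (forall n, 0 <= p n) -> cvg (series p @ \oo) ->
  exists2 l, m <= l & u @ \oo --> l.
Proof.
move=> hm hstep hp hS; set S := series p.
have Sinc : {homo S : n k / (n <= k)%N >-> n <= k}.
  by apply/nondecreasing_seqP => n; rewrite /S seriesSr lerDl.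
have SL := nondecreasing_cvgn_le Sinc hS.
pose t n := u n.+1 - S n.+1.
have tdec : {homo t : n k / (n <= k)%N >-> k <= n}.
  apply/nonincreasing_seqP => n; rewrite /t /S [series _ n.+2]seriesSr.
  have := hstep n.+1 isT; lra.
have tlb : has_lbound (range t).
  exists (m - limn S) => _ [n _ <-]; rewrite /t.
  have := hm n.+1 isT; have := SL n.+1; lra.
have hl : (fun n => u n.+1) @ \oo --> limn t + limn S.
  have -> : (fun n => u n.+1) = t \+ (fun n => S n.+1).
    by apply/funext => n; rewrite /t /= subrK.
  by apply: cvgD; [exact: nonincreasing_is_cvgn tdec tlb | rewrite (cvg_shiftS S)].
exists (limn t + limn S); last by rewrite -(cvg_shiftS u).
rewrite -(cvg_lim _ hl) //; apply: limr_ge; first by apply/cvg_ex; eexists; exact: hl.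
by near=> n; apply: hm.
Unshelve. all: by end_near.
Qed.

Section StepSize.
Variables (R : realType) (H : completeNormedModType R) (A : H -> H) (L mu : R).
Variables (mun pn lam : nat -> R) (w y : nat -> H).
Hypotheses (L_gt0 : 0 < L) (A_lipschitz : lipschitz_op A L).
Hypotheses (mu01 : 0 < mu < 1) (lam1_gt0 : 0 < lam 1%N).
Hypotheses (mun_ge0 : forall n, 0 <= mun n) (pn_ge0 : forall n, 0 <= pn n).
Hypothesis lamS : forall n, (1 <= n)%N -> lam n.+1 =
  if A (w n) != A (y n)
  then Num.min ((mun n + mu) * `|w n - y n| / `|A (w n) - A (y n)|) (lam n + pn n)
  else lam n + pn n.

Lemma step_size_ratio n : (1 <= n)%N ->
  lam n.+1 * `|A (w n) - A (y n)| <= (mun n + mu) * `|w n - y n|.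
Proof.
move=> n1; rewrite lamS //; case: ifP => [hA | /negbFE/eqP->].
  set M := _ / _; have hM : Num.min M (lam n + pn n) <= M by rewrite ge_min lexx.
  apply: (le_trans (ler_wpM2r (normr_ge0 _) hM)).
  by rewrite divfK // normr_eq0 subr_eq0.
rewrite subrr normr0 mulr0 mulr_ge0 ?addr_ge0 //.
by case/andP: mu01 => /ltW.
Qed.

Lemma step_size_le n : (1 <= n)%N -> lam n.+1 <= lam n + pn n.
Proof. by move=> n1; rewrite lamS //; case: ifP => _; rewrite ?ge_min lexx ?orbT. Qed.

Lemma step_size_ge n : (1 <= n)%N -> Num.min (mu / L) (lam 1%N) <= lam n.
Proof.
elim: n => [//|[|n] IH _]; first by rewrite ge_min lexx orbT.
have IH1 := IH isT; have pn0 := pn_ge0 n.+1.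
rewrite (@lamS n.+1) //; case: ifP => hA; last by lra.
rewrite le_min; apply/andP; split; last by lra.
apply: (@le_trans _ _ (mu / L)); first by rewrite ge_min lexx.
have hAn : 0 < `|A (w n.+1) - A (y n.+1)| by rewrite normr_gt0 subr_eq0.
have muL : 0 <= mu / L by case/andP: mu01 => mu0 _; rewrite divr_ge0 // ltW.
rewrite ler_pdivlMr // (le_trans (ler_wpM2l muL (A_lipschitz _ _))) //.
rewrite mulrA divfK ?gt_eqF // ler_wpM2r // lerDr.
exact: mun_ge0.
Qed.

(* The adaptive step size converges to a positive limit, so the effective
   Lipschitz ratio [(mun n + mu) lam n / lam n.+1] tends to [mu]. *)
Lemma step_size_ratio_eventually_lt :
  cvg (series pn @ \oo) -> mun @ \oo --> 0 ->
  exists N, forall n, (N <= n)%N -> ((mun n + mu) * lam n / lam n.+1) ^+ 2 < mu.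
Proof.
move=> hS hmun; case/andP: mu01 => mu0 mu1.
have lh0 : 0 < Num.min (mu / L) (lam 1%N) by rewrite lt_min divr_gt0.
have [l hl lam_l] := nearly_nonincreasing_cvg step_size_ge step_size_le pn_ge0 hS.
have l0 : l != 0 by rewrite gt_eqF // (lt_le_trans lh0).
have lamS_l : (fun n => lam n.+1) @ \oo --> l by rewrite (cvg_shiftS lam).
have hk : (fun n => (mun n + mu) * lam n / lam n.+1) @ \oo --> mu.
  have := cvgM (cvgM (cvgD hmun (cvg_cst mu)) lam_l) (cvgV l0 lamS_l).
  by rewrite add0r -mulrA divff // mulr1; apply.
have : mu * mu < mu by rewrite gtr_pMr.
by move/(cvgr_lt _ (cvgM hk hk)) => [N _ HN]; exists N => n /HN; rewrite expr2.
Qed.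

End StepSize.

Lemma geometric_decay (R : realType) (G : nat -> R) (rho : R) (N : nat) :
  0 <= rho -> (forall n, (N <= n)%N -> G n.+1 <= rho * G n) ->
  forall k, G (k + N)%N <= rho ^+ k * G N.
Proof.
move=> r0 h; elim => [|k IH]; first by rewrite add0n expr0 mul1r.
rewrite addSn; apply: (le_trans (h _ (leq_addl _ _))).
by rewrite exprS -mulrA; apply: ler_wpM2l.
Qed.

(* The finitely many terms before [N] are absorbed into the constant. *)
Lemma eventually_geometric_bound (R : realType) (a G : nat -> R) (rho : R) (N : nat) :
  0 < rho -> (forall n, 0 <= a n) -> (forall n, (N <= n)%N -> a n <= G n) ->
  (forall n, (N <= n)%N -> G n.+1 <= rho * G n) ->
  exists K, 0 <= K /\ forall n, a n <= K * rho ^+ n.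
Proof.
move=> r0 a0 aG hG.
have rn n : 0 < rho ^+ n by apply: exprn_gt0.
have G0 : 0 <= G N by apply: le_trans (aG _ (leqnn N)).
set K0 := \sum_(i < N) a i / rho ^+ i.
have K00 : 0 <= K0 by apply: sumr_ge0 => i _; apply: divr_ge0; [exact: a0 | exact: ltW].
have g0 : 0 <= G N / rho ^+ N by apply: divr_ge0; last exact: ltW.
exists (K0 + G N / rho ^+ N); split; first exact: addr_ge0.
move=> n; case: (ltnP n N) => hn.
- have : a n / rho ^+ n <= K0.
    rewrite /K0 (bigD1 (Ordinal hn)) //= lerDl.
    by apply: sumr_ge0 => i _; apply: divr_ge0; [exact: a0 | exact: ltW].
  rewrite ler_pdivrMr // => h; apply: (le_trans h).
  by apply: ler_wpM2r; [exact: ltW | rewrite lerDl].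
- apply: (le_trans (aG _ hn)).
  have := geometric_decay (ltW r0) hG (n - N); rewrite subnK // => h.
  apply: (le_trans h); rewrite -[in X in _ <= _ * X](subnK hn) exprD mulrCA.
  apply: ler_wpM2l; first exact: ltW.
  rewrite mulrDl divfK ?gt_eqF // lerDr.
  by apply: mulr_ge0; last exact: ltW.
Qed.

Section RelaxedInertialTseng.
Variables (R : realType) (H : completeNormedModType R) (ip : H -> H -> R).
Hypothesis ip_inner : is_inner_product ip.
Variables (A : H -> H) (B : H -> set H) (L r mu : R).
Variables (alpha beta theta mun pn : nat -> R) (alpha0 beta0 theta0 : R).
Variables (x w z y : nat -> H) (lam : nat -> R) (lamhat tau ub : R).
Hypotheses (L_gt0 : 0 < L) (r_gt0 : 0 < r) (A_lipschitz : lipschitz_op A L).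
Hypothesis AB_smon : strongly_monotone_sum ip A B r.
Hypotheses (mu01 : 0 < mu < 1) (lam1_gt0 : 0 < lam 1%N).
Hypotheses (mun_ge0 : forall n, 0 <= mun n) (pn_ge0 : forall n, 0 <= pn n).
Hypothesis lamhatE : lamhat = Num.min (mu / L) (lam 1%N).
Hypothesis tauE : tau = 1 - 2^-1 * Num.min (1 - mu) (2 * lamhat * r).
Hypothesis ubE : ub = (- 1 - beta0 + Num.sqrt ((1 + beta0) ^+ 2
  - 4 * (tau^-1 - 1 - 2 * beta0) * (beta0 - 1))) / (2 * (tau^-1 - 1 - 2 * beta0)).
Hypothesis beta_range : forall n, (1 <= n)%N -> 0 <= beta n <= beta0.
Hypothesis beta0_lt : beta0 < 2^-1 * (tau^-1 - 1).
Hypothesis alpha_range : forall n, (1 <= n)%N -> 0 <= alpha n <= alpha0.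
Hypothesis alpha0_lt : alpha0 < (1 - tau) / tau.
Hypothesis theta0_gt : Num.max ((1 - beta0) / (1 + alpha0 - beta0))
  (beta0 / (1 + beta0 - tau * (1 + alpha0))) < theta0.
Hypothesis theta_range : forall n, (1 <= n)%N -> theta0 <= theta n <= ub.
Hypothesis theta_nondecr : forall n, (1 <= n)%N -> theta n <= theta n.+1.
Hypothesis wE : forall n, (1 <= n)%N -> w n = x n + alpha n *: (x n - x n.-1).
Hypothesis zE : forall n, (1 <= n)%N -> z n = x n + beta n *: (x n - x n.-1).
Hypothesis yE : forall n, (1 <= n)%N ->
  in_resolvent B (lam n) (w n - lam n *: A (w n)) (y n).
Hypothesis lamS : forall n, (1 <= n)%N -> lam n.+1 =
  if A (w n) != A (y n)
  then Num.min ((mun n + mu) * `|w n - y n| / `|A (w n) - A (y n)|) (lam n + pn n)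
  else lam n + pn n.
Hypothesis xS : forall n, (1 <= n)%N -> x n.+1 =
  (1 - theta n) *: z n + theta n *: (y n - lam n *: (A (y n) - A (w n))).
Hypotheses (pn_summable : cvg (series pn @ \oo)) (mun_cvg0 : mun @ \oo --> 0).
Variable p : H.
Hypothesis p_sol : zeros_sum A B p.

Definition fbf_point n := y n - lam n *: (A (y n) - A (w n)).

Definition inertial_energy n := ip (x n - p) (x n - p) +
  inertial_weight (theta n.-1) (beta n.-1) * ip (x n - x n.-1) (x n - x n.-1).

Lemma lamhat_gt0 : 0 < lamhat.
Proof. by case/andP: mu01 => mu0 _; rewrite lamhatE lt_min divr_gt0. Qed.

Lemma lamhat_le_lam n : (1 <= n)%N -> lamhat <= lam n.
Proof.
by rewrite lamhatE; apply: step_size_ge L_gt0 A_lipschitz mu01 mun_ge0 pn_ge0 lamS n.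
Qed.

Lemma tau_range : 2^-1 < tau < 1.
Proof.
have := lamhat_gt0; case/andP: mu01 => mu0 mu1 lh0.
have m0 : 0 < Num.min (1 - mu) (2 * lamhat * r).
  by rewrite lt_min subr_gt0 mu1 !mulr_gt0.
have m1 : Num.min (1 - mu) (2 * lamhat * r) <= 1 - mu by rewrite ge_min lexx.
by rewrite tauE; apply/andP; split; lra.
Qed.

Lemma step_size_sq n : (1 <= n)%N ->
  lam n ^+ 2 * ip (A (w n) - A (y n)) (A (w n) - A (y n)) <=
  ((mun n + mu) * lam n / lam n.+1) ^+ 2 * ip (w n - y n) (w n - y n).
Proof.
move=> n1; have lh0 := lamhat_gt0.
have lam_n : 0 < lam n by rewrite (lt_le_trans lh0) // lamhat_le_lam.
have lam_n1 : 0 < lam n.+1 by rewrite (lt_le_trans lh0) // lamhat_le_lam.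
rewrite !ipxxE // -!exprMn; apply: lerXn2r; rewrite ?nnegrE.
- by rewrite mulr_ge0 // ltW.
- case/andP: mu01 => mu0 _.
  by rewrite !mulr_ge0 ?addr_ge0 ?invr_ge0 // ltW.
have -> : lam n * `|A (w n) - A (y n)| =
    lam n / lam n.+1 * (lam n.+1 * `|A (w n) - A (y n)|).
  by rewrite mulrA divfK ?gt_eqF.
have -> : (mun n + mu) * lam n / lam n.+1 * `|w n - y n| =
    lam n / lam n.+1 * ((mun n + mu) * `|w n - y n|) by field; rewrite gt_eqF.
apply: ler_wpM2l; first by rewrite divr_ge0 // ltW.
by have := step_size_ratio mu01 mun_ge0 lamS n1.
Qed.

Lemma fbf_contraction_eventually : exists N, forall n, (N <= n)%N ->
  ip (fbf_point n - p) (fbf_point n - p) <= tau * ip (w n - p) (w n - p).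
Proof.
have [N hN] := step_size_ratio_eventually_lt L_gt0 A_lipschitz mu01 lam1_gt0
  mun_ge0 pn_ge0 lamS pn_summable mun_cvg0.
exists (maxn 1 N) => n; rewrite geq_max => /andP[n1 nN].
have lh0 := lamhat_gt0; case/andP: mu01 => mu0 mu1.
have lam_n := lamhat_le_lam n1.
rewrite tauE; set m := Num.min (1 - mu) (2 * lamhat * r).
have m0 : 0 <= m by rewrite le_min subr_ge0 ltW //= !mulr_ge0 // ltW.
have m_le_mu : m <= 1 - mu by rewrite ge_min lexx.
have m_le_lam : m <= 2 * lamhat * r by rewrite ge_min lexx orbT.
clearbody m.
apply: (tseng_step_contraction ip_inner AB_smon p_sol _ (yE n1) (step_size_sq n1)).
- exact: ltW (lt_le_trans lh0 lam_n).
- exact: m0.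
- by have := hN n nN; lra.
- apply: (le_trans m_le_lam); apply: ler_wpM2r; first exact: ltW.
  by apply: ler_wpM2l.
Qed.

Lemma inertial_energy_step rho n :
  inertial_rate tau alpha0 beta0 theta0 ub rho -> 0 < theta0 -> ub < 1 -> 0 <= rho ->
  (2 <= n)%N ->
  ip (fbf_point n - p) (fbf_point n - p) <= tau * ip (w n - p) (w n - p) ->
  inertial_energy n.+1 <= rho * inertial_energy n.
Proof.
move=> hrate th0 ub1 rho0 n2 hfbf.
have n1 : (1 <= n)%N by apply: ltnW.
have n1' : (1 <= n.-1)%N by rewrite -ltnS prednK.
have /andP[th_lb th_ub] := theta_range n1; have /andP[th'_lb _] := theta_range n1'.
have th'th : theta n.-1 <= theta n by have := theta_nondecr n1'; rewrite prednK.
have /andP[be0 _] := beta_range n1; have /andP[al0 _] := alpha_range n1.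
have /andP[tau_gt _] := tau_range.
have hU : ip (fbf_point n - p) (fbf_point n - p) <= tau *
    ip ((1 + alpha n) *: (x n - p) - alpha n *: (x n.-1 - p))
       ((1 + alpha n) *: (x n - p) - alpha n *: (x n.-1 - p)).
  by rewrite -(inertial_sub_decomp ip_inner) -wE.
have hZ : x n.+1 - p = (1 - theta n) *: ((1 + beta n) *: (x n - p)
    - beta n *: (x n.-1 - p)) + theta n *: (fbf_point n - p).
  by rewrite xS // zE // (relaxed_sub_decomp ip_inner).
have th_gt0 : 0 < theta n by lra.
have th_lt1 : theta n < 1 by lra.
have tau0 : 0 <= tau by lra.
have := inertial_step_le ip_inner th_gt0 th_lt1 be0 al0 tau0 hU hZ.
have sub_sub (a b : H) : a - p - (b - p) = a - b by rewrite opprB addrA subrK.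
rewrite !sub_sub => hstep; apply: (le_trans hstep).
have [hP hD] := hrate _ _ _ _ _ th'_lb th'th th_ub
  (alpha_range n1) (beta_range n1) (beta_range n1').
rewrite /inertial_energy mulrDr mulrA.
by apply: lerD; apply: ler_wpM2r; rewrite ?ipxx_ge0.
Qed.

Lemma relaxed_inertial_tseng_linear_cvg : exists q K, [/\ 0 < q < 1, 0 <= K &
  forall n, `|x n - p| ^+ 2 <= K * q ^+ n].
Proof.
have /andP[tau_gt tau_lt] := tau_range.
have /andP[be0 be_le] := beta_range (isT : (1 <= 1)%N).
have /andP[al0 al_le] := alpha_range (isT : (1 <= 1)%N).
have /andP[th_lb th_ub] := theta_range (isT : (1 <= 1)%N).
have [th0 ub1 be0_half [rho /andP[rho0 rho1] hrate]] := inertial_rate_of_conditions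
  tau_gt tau_lt (le_trans be0 be_le) beta0_lt (le_trans al0 al_le) alpha0_lt theta0_gt ubE
  (le_trans th_lb th_ub).
have [N hN] := fbf_contraction_eventually.
have energy_ge n : (2 <= n)%N -> ip (x n - p) (x n - p) <= inertial_energy n.
  move=> n2; have n1' : (1 <= n.-1)%N by rewrite -ltnS prednK // ltnW.
  have /andP[th'_lb th'_ub] := theta_range n1'; have /andP[_ be'_ub] := beta_range n1'.
  rewrite lerDl mulr_ge0 ?ipxx_ge0 // divr_ge0 ?mulr_ge0; lra.
have [K [K0 hK]] := eventually_geometric_bound (N := maxn N 2) rho0
  (fun n => ipxx_ge0 ip_inner (x n - p))
  (fun n hn => energy_ge n (leq_trans (leq_maxr _ _) hn))
  (fun n hn => inertial_energy_step hrate th0 ub1 (ltW rho0)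
     (leq_trans (leq_maxr _ _) hn) (hN n (leq_trans (leq_maxl _ _) hn))).
exists rho, K; split=> //; first by rewrite rho0 rho1.
by move=> n; rewrite -(ipxxE ip_inner).
Qed.

End RelaxedInertialTseng.

Theorem theorem4p2 (R : realType) (H : completeNormedModType R)
  (ip : H -> H -> R) (A : H -> H) (B : H -> set H) (L r : R)
  (mu : R) (alpha beta theta : nat -> R) (mun pn : nat -> R)
  (alpha0 beta0 theta0 : R)
  (x w z y : nat -> H) (lam : nat -> R) :
  is_inner_product ip ->
  zeros_sum A B !=set0 ->
  0 < L -> 0 < r ->
  ((lipschitz_op A L /\ strongly_monotone_op ip A r /\ maximal_monotone_mop ip B)
   \/ (lipschitz_op A L /\ monotone_op ip A /\ maximal_monotone_mop ip B
       /\ strongly_monotone_mop ip B r)) ->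
  0 < mu < 1 -> 0 < lam 1%N ->
  (forall n, 0 <= mun n) -> (forall n, 0 <= pn n) ->
  let lamhat := Num.min (mu / L) (lam 1%N) in
  let tau := 1 - 2^-1 * Num.min (1 - mu) (2 * lamhat * r) in
  let ub := (- 1 - beta0 + Num.sqrt ((1 + beta0) ^+ 2
               - 4 * (tau^-1 - 1 - 2 * beta0) * (beta0 - 1)))
            / (2 * (tau^-1 - 1 - 2 * beta0)) in
  (forall n, (1 <= n)%N -> 0 <= beta n <= beta0) ->
  beta0 < 2^-1 * (tau^-1 - 1) ->
  (forall n, (1 <= n)%N -> 0 <= alpha n <= alpha0) ->
  alpha0 < (1 - tau) / tau ->
  Num.max ((1 - beta0) / (1 + alpha0 - beta0))
          (beta0 / (1 + beta0 - tau * (1 + alpha0))) < theta0 ->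
  (forall n, (1 <= n)%N -> theta0 <= theta n <= ub) ->
  (forall n, (1 <= n)%N -> theta n <= theta n.+1) ->
  (forall n, (1 <= n)%N -> w n = x n + alpha n *: (x n - x n.-1)) ->
  (forall n, (1 <= n)%N -> z n = x n + beta n *: (x n - x n.-1)) ->
  (forall n, (1 <= n)%N -> in_resolvent B (lam n) (w n - lam n *: A (w n)) (y n)) ->
  (forall n, (1 <= n)%N -> lam n.+1 =
     if A (w n) != A (y n)
     then Num.min ((mun n + mu) * `|w n - y n| / `|A (w n) - A (y n)|)
                  (lam n + pn n)
     else lam n + pn n) ->
  (forall n, (1 <= n)%N -> w n != y n) ->
  (forall n, (1 <= n)%N -> x n.+1 =
     (1 - theta n) *: z n + theta n *: (y n - lam n *: (A (y n) - A (w n)))) ->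
  cvg (series pn @ \oo) ->
  mun @ \oo --> (0 : R) ->
  exists p q K, [/\ zeros_sum A B p, 0 < q < 1, 0 <= K &
     forall n, `|x n - p| ^+ 2 <= K * q ^+ n].
Proof.
(* The estimates never use that the algorithm does not stop ([w n != y n]). *)
move=> ip_inner [p p_sol] L_gt0 r_gt0 hAB mu01 lam1_gt0 mun_ge0 pn_ge0 lamhat tau ub
  beta_range beta0_lt alpha_range alpha0_lt theta0_gt theta_range theta_nondecr
  wE zE yE lamS _ xS pn_summable mun_cvg0.
have A_lipschitz : lipschitz_op A L by case: hAB => [[]|[]].
have AB_smon : strongly_monotone_sum ip A B r.
  apply: strongly_monotone_sum_of.
  by case: hAB => [[_ [? [? _]]] | [_ [? [[? _] ?]]]]; [left | right].
have [q [K [q01 K0 hK]]] := relaxed_inertial_tseng_linear_cvg ip_inner L_gt0 r_gt0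
  A_lipschitz AB_smon mu01 lam1_gt0 mun_ge0 pn_ge0 erefl erefl erefl beta_range
  beta0_lt alpha_range alpha0_lt theta0_gt theta_range theta_nondecr wE zE yE lamS xS
  pn_summable mun_cvg0 p_sol.
by exists p, q, K.
Qed.
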